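(* Let $\rho$ be a density operator on a $d$-dimensional complex Hilbert space $\mathbb{H}$, let $\{\ket{a_i}\}_{i=1}^d$ be an orthonormal basis and $\{\ket{b_k}\}_{k=1}^d$ an orthonormal basis mutually unbiased with respect to $\{\ket{a_i}\}$ (i.e. $|\langle a_i|b_k\rangle|^2 = 1/d$ for all $i,k$). Define the extended KD distribution $Q^\star_{i,j,k} = \langle a_j|b_k\rangle\langle b_k|a_i\rangle\langle a_i|\rho|a_j\rangle$, the moments $r_n = \sum_{i,j,k} (Q^\star_{i,j,k})^n$, and for a positive integer $m$ the $(m+1)\times(m+1)$ Hankel matrix $H_m(\mathbf{r})$ with entries $[H_m(\mathbf{r})]_{ij} = r_{i+j+1}$, $i,j\in\{0,\dots,m\}$. If for some positive integer $m$ the inequality $-\det[H_m(\mathbf{r})] > 0$ holds (in particular $\det[H_m(\mathbf{r})]$ is real), then $\rho$ has nonzero $\ell_1$-norm of coherence in the basis $\{\ket{a_i}\}$, i.e. $\mathcal{C}_{\ell_1}(\rho,\{\ket{a_i}\}) := \sum_{i\neq j} |\langle a_i|\rho|a_j\rangle| > 0$.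
   Context: The $\ell_1$-norm of coherence of $\rho$ with respect to the basis $\{\ket{a_i}\}$ is the sum of the absolute values of the off-diagonal entries of $\rho$ in that basis. *)

(* Complex scalars: an arbitrary numClosedFieldType C
   (e.g. the complex numbers R[i] over a real closed field, or algC). *)
From HB Require Import structures.
From mathcomp Require Import all_boot all_order all_algebra.
Set Implicit Arguments. Unset Strict Implicit. Unset Printing Implicit Defensive.
Import Order.TTheory GRing.Theory Num.Theory.
Local Open Scope ring_scope.

Definition inner (C : numClosedFieldType) (d : nat) (u v : 'cV[C]_d) : C :=
  \sum_(l < d) (u l 0)^* * v l 0.

Definition density_operator (C : numClosedFieldType) (d : nat) (rho : 'M[C]_d) : Prop :=
  [/\ (forall i j, rho j i = (rho i j)^*),
      (forall v : 'cV[C]_d, 0 <= inner v (rho *m v)) &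
      \tr rho = 1].

Definition orthonormal_basis (C : numClosedFieldType) (d : nat) (a : 'I_d -> 'cV[C]_d) : Prop :=
  forall i j, inner (a i) (a j) = (i == j)%:R.

Definition mutually_unbiased (C : numClosedFieldType) (d : nat) (a b : 'I_d -> 'cV[C]_d) : Prop :=
  forall i k, `|inner (a i) (b k)| ^+ 2 = d%:R^-1.

Definition extKD (C : numClosedFieldType) (d : nat) (rho : 'M[C]_d)
  (a b : 'I_d -> 'cV[C]_d) (i j k : 'I_d) : C :=
  inner (a j) (b k) * inner (b k) (a i) * inner (a i) (rho *m a j).

Definition kd_moment (C : numClosedFieldType) (d : nat) (rho : 'M[C]_d)
  (a b : 'I_d -> 'cV[C]_d) (n : nat) : C :=
  \sum_(i < d) \sum_(j < d) \sum_(k < d) (extKD rho a b i j k) ^+ n.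

Definition hankel (C : numClosedFieldType) (r : nat -> C) (m : nat) : 'M[C]_m.+1 :=
  \matrix_(i < m.+1, j < m.+1) r (i + j + 1)%N.

Definition l1_coherence (C : numClosedFieldType) (d : nat) (rho : 'M[C]_d)
  (a : 'I_d -> 'cV[C]_d) : C :=
  \sum_(i < d) \sum_(j < d | i != j) `|inner (a i) (rho *m a j)|.

(* If the l1-coherence of rho vanishes, rho is diagonal in the basis {a_i}, so the only
   nonzero KD quasiprobabilities are Q*_{i,i,k} = |<a_i|b_k>|^2 rho_ii = rho_ii / d >= 0.
   Then r_n = sum_i d x_i^n with x_i >= 0, and the Hankel matrix of the r_{i+j+1} is the
   Gram matrix W^* W of W_{l,i} = sqrt(d x_l) x_l^i.  A Gram matrix has nonnegative
   determinant: in an orthonormal eigenbasis its eigenvalues are squared norms. *)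
From HB Require Import structures.
From mathcomp Require Import all_boot all_order all_algebra.
Import Order.TTheory GRing.Theory Num.Theory.
Set Implicit Arguments. Unset Strict Implicit. Unset Printing Implicit Defensive.
Local Open Scope ring_scope.

Section Gram.
Local Open Scope sesquilinear_scope.
Variable C : numClosedFieldType.

Lemma gram_hermitian m n (W : 'M[C]_(m, n)) : (W^t* *m W)^t* = W^t* *m W.
Proof. by rewrite trmx_mul map_mxM trmxCK. Qed.

Lemma gram_diag_ge0 m n (W : 'M[C]_(m, n)) i : 0 <= (W^t* *m W) i i.
Proof. by rewrite mxE sumr_ge0 // => l _; rewrite !mxE mulrC mul_conjC_ge0. Qed.

Lemma det_gram_ge0 m n (W : 'M[C]_(m, n)) : 0 <= \det (W^t* *m W).
Proof.
set A := W^t* *m W; set P := spectralmx A; set D := spectral_diag A.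
have P_unitary : P \is unitarymx := spectral_unitarymx A.
have A_diag : A = invmx P *m diag_mx D *m P.
  by apply/orthomx_spectralP/normalmxP; rewrite gram_hermitian.
have diagE : diag_mx D = (W *m P^t*)^t* *m (W *m P^t*).
  rewrite trmx_mul map_mxM trmxCK !mulmxA -(mulmxA P) -/A A_diag.
  by rewrite invmx_unitary // !mulmxA (unitarymxP _) // mul1mx mulmxtVK.
rewrite A_diag !det_mulmx det_inv mulrAC mulVr ?mul1r; last first.
  by rewrite -unitmxE spectral_unit.
rewrite det_diag prodr_ge0 // => i _.
by have := gram_diag_ge0 (W *m P^t*) i; rewrite -diagE mxE eqxx mulr1n.
Qed.

Lemma eq_hankel (r s : nat -> C) m :
  (forall n, r n.+1 = s n.+1) -> hankel r m = hankel s m.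
Proof. by move=> rs; apply/matrixP => i j; rewrite !mxE addn1 rs. Qed.

Definition discrete_moment N (w x : 'I_N -> C) n := \sum_l w l * x l ^+ n.

Lemma hankel_moments_gram N m (w x : 'I_N -> C) :
  (forall l, 0 <= w l) -> (forall l, 0 <= x l) ->
  let W := \matrix_(l < N, i < m.+1) (sqrtC (w l * x l) * x l ^+ i) in
  hankel (discrete_moment w x) m = W^t* *m W.
Proof.
move=> w_ge0 x_ge0 W; apply/matrixP => i j; rewrite !mxE.
apply: eq_bigr => l _; rewrite !mxE rmorphM rmorphXn /=.
rewrite !geC0_conj ?sqrtC_ge0 ?mulr_ge0 //.
by rewrite mulrACA -expr2 sqrtCK -exprD addn1 exprS !mulrA.
Qed.

Lemma det_hankel_moments_ge0 N m (w x : 'I_N -> C) :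
  (forall l, 0 <= w l) -> (forall l, 0 <= x l) ->
  0 <= \det (hankel (discrete_moment w x) m).
Proof. by move=> w_ge0 x_ge0; rewrite hankel_moments_gram // det_gram_ge0. Qed.

End Gram.

Section KirkwoodDirac.
Variables (C : numClosedFieldType) (d : nat).
Implicit Types (rho : 'M[C]_d) (a b : 'I_d -> 'cV[C]_d).

Lemma conj_inner (u v : 'cV[C]_d) : (inner u v)^* = inner v u.
Proof.
by rewrite /inner rmorph_sum; apply: eq_bigr => l _; rewrite rmorphM /= conjCK mulrC.
Qed.

Lemma l1_coherence_ge0 rho a : 0 <= l1_coherence rho a.
Proof. by apply: sumr_ge0 => i _; apply: sumr_ge0. Qed.

Lemma l1_coherence_eq0 rho a : l1_coherence rho a = 0 ->
  forall i j, i != j -> inner (a i) (rho *m a j) = 0.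
Proof.
move=> coh0 i j ij; apply/normr0_eq0.
have row0 : \sum_(k | i != k) `|inner (a i) (rho *m a k)| = 0.
  by apply: (psumr_eq0P _ coh0) => // k _; apply: sumr_ge0.
exact: (psumr_eq0P _ row0).
Qed.

Lemma extKD_diag rho a b i k : mutually_unbiased a b ->
  extKD rho a b i i k = inner (a i) (rho *m a i) / d%:R.
Proof.
by move=> unbiased; rewrite /extKD -[inner (b k) (a i)]conj_inner -normCK unbiased mulrC.
Qed.

(* Only successor moments: the vanishing off-diagonal terms contribute 0 ^+ 0 = 1 to r_0. *)
Lemma kd_moment_incoherent rho a b n : mutually_unbiased a b ->
  (forall i j, i != j -> inner (a i) (rho *m a j) = 0) ->
  kd_moment rho a b n.+1 =
  discrete_moment (fun=> d%:R) (fun i => inner (a i) (rho *m a i) / d%:R) n.+1.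
Proof.
move=> unbiased offdiag0; apply: eq_bigr => i _.
rewrite (bigD1 i) //= [X in _ + X]big1 => [|j ji]; last first.
  by apply: big1 => k _; rewrite /extKD offdiag0 1?eq_sym // mulr0 expr0n.
under eq_bigr => k _ do rewrite extKD_diag //.
by rewrite addr0 sumr_const card_ord mulr_natl.
Qed.

End KirkwoodDirac.

Theorem theorem3 (C : numClosedFieldType) (d : nat) (rho : 'M[C]_d)
  (a b : 'I_d -> 'cV[C]_d) (m : nat) :
  density_operator rho ->
  orthonormal_basis a ->
  orthonormal_basis b ->
  mutually_unbiased a b ->
  (0 < m)%N ->
  0 < - \det (hankel (kd_moment rho a b) m) ->
  0 < l1_coherence rho a.
Proof.
move=> [_ rho_psd _] _ _ unbiased _ hankel_neg.
rewrite lt0r l1_coherence_ge0 andbT.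
apply: contraTneq hankel_neg => /l1_coherence_eq0 offdiag0.
rewrite oppr_gt0 (eq_hankel _ (fun n => kd_moment_incoherent n unbiased offdiag0)).
by rewrite le_gtF // det_hankel_moments_ge0 // => i; rewrite ?divr_ge0 ?ler0n ?rho_psd.
Qed.
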